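(* Let $T$ be a decomposition tree of a distance-hereditary graph $G$, and let $v$ be an internal node of $T$ labeled $\otimes$ with left child $v_l$ and right child $v_r$, such that property (P) holds at $v_l$ and at $v_r$. Then $$\hat\alpha(v)=\begin{cases}\hat\alpha(v_l)-\hat\beta(v_r) & \text{if } \hat\alpha(v_l)>\hat\beta(v_r),\\ \hat\alpha(v_r)-\hat\beta(v_l) & \text{if } \hat\alpha(v_r)>\hat\beta(v_l),\\ |\hat\alpha(v_l)-\hat\alpha(v_r)| \bmod 2 & \text{otherwise.}\end{cases}$$
   Context: All graphs are finite, simple, undirected. For a graph $H$ and $S\subseteq V(H)$, $N_H[S]$ is $S$ together with all vertices adjacent to a vertex of $S$, and $H[S]$ is the induced subgraph. Graphs carry a ''twin set'': a single-vertex graph on $x$ has twin set $\{x\}$. For vertex-disjoint graphs $G_l,G_r$ with twin sets $TS(G_l),TS(G_r)$: the true twin operation $G_l\otimes G_r$ has vertex set $V(G_l)\cup V(G_r)$, edge set $E(G_l)\cup E(G_r)\cup\{uw: u\in TS(G_l), w\in TS(G_r)\}$ and twin set $TS(G_l)\cup TS(G_r)$; the false twin operation $G_l\odot G_r$ has vertex set $V(G_l)\cup V(G_r)$, edge set $E(G_l)\cup E(G_r)$, twin set $TS(G_l)\cup TS(G_r)$; the attachment operation $G_l\oplus G_r$ has the same vertex and edge sets as $G_l\otimes G_r$ and twin set $TS(G_l)$. A decomposition tree $T$ of $G$ is a rooted binary tree whose leaves are in bijection with $V(G)$, each internal node having a left and a right child and a label in $\{\otimes,\odot,\oplus\}$;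 for each node $v$ define $\hat G(v)$ and $\hat{TS}(v)$ recursively: for a leaf $x$, the single-vertex graph on $x$ with twin set $\{x\}$; for an internal node $v$ with label $\circ$ and children $v_l,v_r$, $\hat G(v)=\hat G(v_l)\circ\hat G(v_r)$ with the corresponding twin set; one requires $\hat G(\text{root})=G$. Then $\hat G(v)$ is the subgraph of $G$ induced by the set $\hat V(v)$ of leaves below $v$. For a node $u$ and $0\le k\le|\hat{TS}(u)|$, call $S\subseteq\hat V(u)$ $k$-feasible if $\hat V(u)\setminus\hat{TS}(u)\subseteq N_{\hat G(u)}[S]$ and there is $X\subseteq S\cap\hat{TS}(u)$ with $|X|=k$ such that $\hat G(u)[S\setminus X]$ has a perfect matching. $\hat\gamma_k(u)$ is the minimum size of a $k$-feasible set. $\hat{min}(u)=\min\{\hat\gamma_k(u):0\le k\le|\hat{TS}(u)|\}$, and $\hat\alpha(u)$, $\hat\beta(u)$ are the smallest and the largest $k$ with $\hat\gamma_k(u)=\hat{min}(u)$. Property (P) holds at $u$ if for every $0\le k\le|\hat{TS}(u)|$: $\hat\gamma_k(u)=\hat{min}(u)+\hat\alpha(u)-k$ when $k\le\hat\alpha(u)$; $\hat\gamma_k(u)=\hat{min}(u)+k-\hat\beta(u)$ when $k\ge\hat\beta(u)$; $\hat\gamma_k(u)=\hat{min}(u)$ when $\hat\alpha(u)<k<\hat\beta(u)$ and $k-\hat\alpha(u)$ is even; and $\hat\gamma_k(u)=\hat{min}(u)+1$ otherwise. *)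

From mathcomp Require Import all_boot.
Set Implicit Arguments. Unset Strict Implicit. Unset Printing Implicit Defensive.

Definition walk_in (V : finType) (e : rel V) (S : {set V}) (u w : V) (n : nat) : Prop :=
  exists p : seq V, [/\ size p = n, path e u p, last u p = w & all (fun x => x \in S) (u :: p)].

(* distance-hereditary: in every induced subgraph G[S], any two vertices that are
   connected in G[S] have the same distance in G[S] as in G
   (dist_{G[S]} >= dist_G always holds, so we require dist_{G[S]} <= dist_G). *)
Definition distance_hereditary (V : finType) (e : rel V) : Prop :=
  forall (S : {set V}) (u w : V) (n m : nat),
    walk_in e S u w n -> walk_in e [set: V] u w m ->
    exists n', n' <= m /\ walk_in e S u w n'.

Inductive dop := TrueTwin | FalseTwin | Attach.

Inductive dtree (V : Type) :=
| Leaf of V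
| Node of dop & dtree V & dtree V.

Arguments Leaf {V}.
Arguments Node {V}.

Section Hat.
Variable V : finType.

Fixpoint dleaves (t : dtree V) : seq V :=
  match t with Leaf x => [:: x] | Node _ l r => dleaves l ++ dleaves r end.

Fixpoint dV (t : dtree V) : {set V} :=
  match t with Leaf x => [set x] | Node _ l r => dV l :|: dV r end.

Fixpoint dTS (t : dtree V) : {set V} :=
  match t with
  | Leaf x => [set x]
  | Node Attach l _ => dTS l
  | Node _ l r => dTS l :|: dTS r
  end.

Fixpoint dE (t : dtree V) (u w : V) : bool :=
  match t with
  | Leaf _ => false
  | Node o l r =>
      [|| dE l u w, dE r u w
        | match o with FalseTwin => false | _ =>
            ((u \in dTS l) && (w \in dTS r)) || ((w \in dTS l) && (u \in dTS r)) end]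
  end.

Definition decomp_tree (e : rel V) (T : dtree V) : Prop :=
  [/\ uniq (dleaves T), (forall x : V, x \in dleaves T) & (forall u w, e u w = dE T u w)].

Fixpoint is_node (s t : dtree V) : Prop :=
  s = t \/ match t with Leaf _ => False | Node _ l r => is_node s l \/ is_node s r end.

Definition cnbh (t : dtree V) (S : {set V}) : {set V} :=
  S :|: [set x | [exists y in S, dE t x y]].

Definition has_pm (t : dtree V) (W : {set V}) : bool :=
  [exists M : {set {set V}},
     [forall m in M, [exists x in W, [exists y in W,
        (m == [set x; y]) && (x != y) && dE t x y]]]
     && [forall x in W, #|[set m in M | x \in m]| == 1]].

Definition kfeasible (k : nat) (t : dtree V) (S : {set V}) : bool :=
  [&& S \subset dV t, (dV t :\: dTS t) \subset cnbh t S &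
     [exists X : {set V},
        [&& X \subset S :&: dTS t, #|X| == k & has_pm t (S :\: X)]]].

(* "infinity": strictly larger than the size of any set of vertices *)
Definition infty : nat := #|V|.+1.

(* \hat\gamma_k(t): minimum size of a k-feasible set (infty if none) *)
Definition hgamma (k : nat) (t : dtree V) : nat :=
  \big[minn/infty]_(S : {set V} | kfeasible k t S) #|S|.

Definition hmin (t : dtree V) : nat :=
  \big[minn/infty]_(k < #|dTS t|.+1) hgamma k t.

Definition argks (t : dtree V) : seq nat :=
  [seq k <- iota 0 (#|dTS t|.+1) | hgamma k t == hmin t].

Definition halpha (t : dtree V) : nat := head 0 (argks t).
Definition hbeta (t : dtree V) : nat := last 0 (argks t).

Definition propP (t : dtree V) : Prop :=
  forall k, k <= #|dTS t| ->
    hgamma k t =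
      if k <= halpha t then hmin t + halpha t - k
      else if hbeta t <= k then hmin t + k - hbeta t
      else if ~~ odd (k - halpha t) then hmin t
      else (hmin t).+1.

End Hat.

(* At a true-twin node the two sides are joined by exactly the edges between their
   twin sets.  Hence a k-feasible set S of the node splits into an (x_l + c)-feasible
   set of the left child and an (x_r + c)-feasible set of the right child, where
   k = x_l + x_r and c is the number of matching edges crossing between the sides
   (the crossing vertices of the two sides are equinumerous).  Conversely an
   a-feasible set of the left child and a b-feasible set of the right child combine,
   by matching c of the unmatched twins across, into an (a + b - 2c)-feasible set for
   every c <= min(a, b).  So min(v) = min(v_l) + min(v_r), and alpha(v) is the least
   a + b - 2c with c <= min(a, b) and a, b minimising at the children.  By (P) and
   the parity |S| = k (mod 2) of k-feasible sets, the minimising indices of a child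
   are those of [alpha, beta] with the parity of alpha, and the minimum over them is
   the stated formula. *)

From mathcomp Require Import all_boot zify.
Set Implicit Arguments. Unset Strict Implicit. Unset Printing Implicit Defensive.

Section BigMin.
Variables (I : eqType) (r : seq I) (P : pred I) (F : I -> nat) (x0 : nat).

Lemma bigmin_le j : j \in r -> P j -> \big[minn/x0]_(i <- r | P i) F i <= F j.
Proof.
elim: r => [|i s IH] //; rewrite inE big_cons => /orP[/eqP<- Pj|js Pj].
  by rewrite Pj geq_minl.
by case: ifP => _; [rewrite geq_min IH ?orbT | exact: IH].
Qed.

Lemma bigmin_le_idx : \big[minn/x0]_(i <- r | P i) F i <= x0.
Proof.
elim: r => [|i s IH]; rewrite ?big_nil ?big_cons //.
by case: ifP => // _; rewrite geq_min IH orbT.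
Qed.

Lemma bigmin_geq m :
  m <= x0 -> (forall i, P i -> m <= F i) -> m <= \big[minn/x0]_(i <- r | P i) F i.
Proof.
move=> m_x0 m_F; apply: (big_ind (fun x => m <= x)) => // x y mx my.
by rewrite leq_min mx my.
Qed.

Lemma bigmin_attained :
  \big[minn/x0]_(i <- r | P i) F i < x0 ->
  exists2 i, P i & \big[minn/x0]_(i <- r | P i) F i = F i.
Proof.
apply: (big_ind (fun x => x < x0 -> exists2 i, P i & x = F i)) => [|x y hx hy|i Pi _].
- by rewrite ltnn.
- by rewrite /minn; case: (ltnP x y).
- by exists i.
Qed.

End BigMin.

Lemma head_filter_iota (p : pred nat) n a :
  a < n -> p a -> (forall k, k < a -> ~~ p k) -> head 0 [seq k <- iota 0 n | p k] = a.
Proof.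
move=> a_n pa below_a.
rewrite -(subnKC (ltnW a_n)) iotaD filter_cat.
rewrite (@eq_in_filter _ _ pred0) => [|k]; last by rewrite mem_iota => /andP[_ /below_a/negbTE].
by rewrite filter_pred0 add0n -(subnSK a_n) /= pa.
Qed.

Section FinsetFacts.
Variable T : finType.
Implicit Types A B X Y Z : {set T}.

Lemma exists_subset_card A n : n <= #|A| -> exists2 B : {set T}, B \subset A & #|B| = n.
Proof.
case/card_geqP => s [s_uniq <- sA]; exists [set x in s].
  by apply/subsetP => x; rewrite inE => /sA.
by rewrite cardsE (card_uniqP s_uniq).
Qed.

Lemma cardsU_disjoint A B : [disjoint A & B] -> #|A :|: B| = #|A| + #|B|.
Proof. by move=> AB; apply/eqP; rewrite (leq_card_setU A B).2. Qed.

Lemma card_disjoint_cover A B Y : [disjoint A & B] -> Y \subset A :|: B ->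
  #|Y| = #|Y :&: A| + #|Y :&: B|.
Proof.
move=> AB YAB; rewrite -{1}(setIidPl YAB) setIUr cardsU_disjoint //.
exact: disjointW (subsetIr _ _) (subsetIr _ _) AB.
Qed.

Lemma setD_setDU A X Y Z : Y \subset X -> X \subset A -> [disjoint A & Z] ->
  A :\: ((X :\: Y) :|: Z) = (A :\: X) :|: Y.
Proof.
move=> YX XA AZ; rewrite setDUr (setDidPl AZ) (setIidPl (subsetDl _ _)) setDDr.
by rewrite (setIidPr (subset_trans YX XA)).
Qed.

End FinsetFacts.

Section PerfectMatching.
Variables (V : finType) (E : rel V).
Implicit Types (W A B : {set V}) (M : {set {set V}}).

Definition perfect_matching W M : Prop :=
  (forall m, m \in M -> exists x y, [/\ x \in W, y \in W, m = [set x; y], x != y & E x y]) /\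
  (forall x, x \in W -> #|[set m in M | x \in m]| = 1).

Lemma perfect_matching_memW W M m z : perfect_matching W M -> m \in M -> z \in m -> z \in W.
Proof. by case=> edges _ /edges[x [y [xW yW -> _ _]]]; rewrite !inE => /orP[]/eqP->. Qed.

Lemma perfect_matching_cover W M z :
  perfect_matching W M -> z \in W -> exists2 m, m \in M & z \in m.
Proof.
case=> _ once zW; have /card_gt0P[m] : 0 < #|[set m in M | z \in m]| by rewrite once.
by rewrite inE => /andP[]; exists m.
Qed.

Lemma perfect_matching_block_uniq W M z m1 m2 : perfect_matching W M -> z \in W ->
  m1 \in M -> m2 \in M -> z \in m1 -> z \in m2 -> m1 = m2.
Proof.
case=> _ once zW m1M m2M zm1 zm2; have /eqP/cards1P[m0 blocks] := once z zW.
have : m1 \in [set m in M | z \in m] by rewrite inE m1M.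
have : m2 \in [set m in M | z \in m] by rewrite inE m2M.
by rewrite blocks !inE => /eqP-> /eqP->.
Qed.

Lemma perfect_matching0 : perfect_matching set0 set0.
Proof. by split=> [m|x]; rewrite inE. Qed.

Lemma perfect_matching_pair x y :
  x != y -> E x y -> perfect_matching [set x; y] [set [set x; y]].
Proof.
move=> xy Exy; split=> [m|z zxy].
  by rewrite inE => /eqP->; exists x, y; rewrite !inE !eqxx orbT.
suff -> : [set m in [set [set x; y]] | z \in m] = [set [set x; y]] by rewrite cards1.
by apply/setP => m; rewrite !inE; case: eqP => // ->.
Qed.

Lemma perfect_matchingU W1 W2 M1 M2 : [disjoint W1 & W2] ->
  perfect_matching W1 M1 -> perfect_matching W2 M2 -> perfect_matching (W1 :|: W2) (M1 :|: M2).
Proof.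
move=> W12 pm1 pm2; have [[edges1 once1] [edges2 once2]] := (pm1, pm2); split=> [m|x].
  rewrite inE => /orP[/edges1|/edges2] [x [y [xW yW -> xy Exy]]];
  by exists x, y; rewrite !inE ?xW ?yW ?orbT.
have no_block W M : perfect_matching W M -> x \notin W -> [set m in M | x \in m] = set0.
  move=> pm xW; apply/setP => m; rewrite !inE; apply/negbTE/andP => -[mM xm].
  by move: xW; rewrite (perfect_matching_memW pm mM xm).
have -> : [set m in M1 :|: M2 | x \in m] = [set m in M1 | x \in m] :|: [set m in M2 | x \in m].
  by apply/setP => m; rewrite !inE andb_orl.
rewrite inE => /orP[xW|xW].
- by rewrite (no_block _ _ pm2) ?setU0 ?once1 ?(disjointFr W12 xW).
- by rewrite (no_block _ _ pm1) ?set0U ?once2 ?(disjointFl W12 xW).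
Qed.

Lemma perfect_matching_even W M : perfect_matching W M -> ~~ odd #|W|.
Proof.
move=> pm; have [edges _] := pm.
have partM : partition M W.
  apply/and3P; split.
  - apply/eqP/setP => z; apply/bigcupP/idP => [[m mM zm]|zW].
      exact: perfect_matching_memW pm mM zm.
    by have [m mM zm] := perfect_matching_cover pm zW; exists m.
  - apply/trivIsetP => m1 m2 m1M m2M m12; rewrite -setI_eq0; apply/eqP/setP => z.
    rewrite !inE; apply/negP => /andP[zm1 zm2]; move/eqP: m12; apply.
    exact: perfect_matching_block_uniq pm (perfect_matching_memW pm m1M zm1) m1M m2M zm1 zm2.
  - by apply/negP => /edges[x [y [_ _ /setP/(_ x) + _ _]]]; rewrite !inE eqxx.
rewrite (card_partition partM) (eq_bigr (fun _ => 2)) => [|m /edges[x [y [_ _ -> xy _]]]].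
  by rewrite sum_nat_const muln2 odd_double.
by rewrite cards2 xy.
Qed.

Lemma perfect_matching_biclique n A B : #|A| = n -> #|B| = n -> [disjoint A & B] ->
  {in A & B, forall x y, E x y} -> exists M, perfect_matching (A :|: B) M.
Proof.
elim: n A B => [|n IH] A B cardA cardB AB EAB.
  by exists set0; rewrite (cards0_eq cardA) (cards0_eq cardB) setU0; exact: perfect_matching0.
have /card_gt0P[x xA] : 0 < #|A| by rewrite cardA.
have /card_gt0P[y yB] : 0 < #|B| by rewrite cardB.
have xy : x != y by apply: contraTneq yB => <-; rewrite (disjointFr AB xA).
have cardAx : #|A :\ x| = n by move: cardA; rewrite (cardsD1 x) xA => -[].
have cardBy : #|B :\ y| = n by move: cardB; rewrite (cardsD1 y) yB => -[].
have [M pmM] := IH _ _ cardAx cardBy (disjointW (subsetDl _ _) (subsetDl _ _) AB)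
  (fun u v uA vB => EAB u v (setD1P uA).2 (setD1P vB).2).
have -> : A :|: B = (A :\ x :|: B :\ y) :|: [set x; y].
  by rewrite -{1}(setD1K xA) -{1}(setD1K yB) setUACA setUC.
exists (M :|: [set [set x; y]]).
apply: perfect_matchingU pmM (perfect_matching_pair xy (EAB x y xA yB)).
apply/pred0P => z /=; rewrite !inE; have [->|_] := eqVneq z x.
  by rewrite (disjointFr AB xA) andbF.
by have [->|_] := eqVneq z y; rewrite ?(disjointFl AB yB) ?andbF.
Qed.

Definition matched_within W M A :=
  [set x in W :&: A | [exists m in M, (x \in m) && (m \subset A)]].

Definition crossing W M A := (W :&: A) :\: matched_within W M A.

Lemma crossing_partner W M A x : perfect_matching W M -> x \in crossing W M A ->
  exists y, [/\ y \in W, y \notin A, [set x; y] \in M & E x y || E y x].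
Proof.
move=> pm; rewrite !inE => /andP[+ /andP[xW xA]]; rewrite xW xA /= => /existsPn no_inner.
have [m mM xm] := perfect_matching_cover pm xW.
have [u [v [uW vW muv _ Euv]]] := pm.1 m mM.
move: (no_inner m); rewrite mM xm /= muv subUset !sub1set.
move: xm; rewrite muv !inE => /orP[]/eqP xuv; rewrite -xuv xA ?andbT => out.
- by exists v; rewrite xuv -muv Euv; split.
- by exists u; rewrite xuv setUC -muv Euv orbT; split.
Qed.

Lemma perfect_matching_within W M A : perfect_matching W M ->
  perfect_matching (matched_within W M A) [set m in M | m \subset A].
Proof.
move=> pm; split=> [m|z].
  rewrite inE => /andP[mM mA]; have [x [y [_ _ mxy xy Exy]]] := pm.1 m mM.
  have inner z : z \in m -> z \in matched_within W M A.
    move=> zm; rewrite !inE (perfect_matching_memW pm mM zm) (subsetP mA z zm) /=.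
    by apply/existsP; exists m; rewrite mM zm mA.
  by exists x, y; rewrite !inner // mxy !inE eqxx ?orbT.
rewrite !inE => /andP[/andP[zW _] /existsP[m0 /and3P[m0M zm0 m0A]]].
apply/eqP; rewrite eqn_leq -{1}(pm.2 z zW) subset_leq_card /=.
  by apply/card_gt0P; exists m0; rewrite !inE m0M m0A.
by apply/subsetP => m; rewrite !inE => /andP[/andP[-> _] ->].
Qed.

Lemma card_crossing_le W M A B : perfect_matching W M -> [disjoint A & B] ->
  W \subset A :|: B -> #|crossing W M A| <= #|crossing W M B|.
Proof.
move=> pm AB WAB.
(* The matching partner maps the crossing vertices of A injectively into those of B. *)
have inA x : x \in crossing W M A -> x \in A by rewrite !inE => /andP[_ /andP[_ ->]].
pose partner x := odflt x [pick y | ([set x; y] \in M) && (y \notin A)].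
have partnerP x : x \in crossing W M A -> ([set x; partner x] \in M) && (partner x \notin A).
  move=> xC; rewrite /partner; case: pickP => [y -> //|none].
  by have [y [_ yA xyM _]] := crossing_partner pm xC; move: (none y); rewrite xyM yA.
have partnerW x : x \in crossing W M A -> partner x \in W.
  by case/partnerP/andP => xyM _; apply: perfect_matching_memW pm xyM _; rewrite !inE eqxx orbT.
have block_partner x m :
    x \in crossing W M A -> m \in M -> partner x \in m -> m = [set x; partner x].
  move=> xC mM ym; have /andP[xyM _] := partnerP x xC.
  by apply: perfect_matching_block_uniq pm (partnerW x xC) mM xyM ym _; rewrite !inE eqxx orbT.
rewrite -(card_in_imset (f := partner)) => [|x1 x2 x1C x2C e12].
  apply/subset_leq_card/subsetP => _ /imsetP[x xC ->].
  have /andP[_ yA] := partnerP x xC.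
  have yB : partner x \in B by move: (subsetP WAB _ (partnerW x xC)); rewrite inE (negbTE yA).
  rewrite !inE partnerW //= yB andbT; apply/existsP => -[m /and3P[mM ym mB]].
  move: mB; rewrite (block_partner x m) // subUset sub1set => /andP[xB _].
  by rewrite (disjointFr AB (inA x xC)) in xB.
have x1_in : x1 \in [set x2; partner x2].
  have x1yM : [set x1; partner x2] \in M by rewrite -e12; case/andP: (partnerP x1 x1C).
  by rewrite -(block_partner x2 _ x2C x1yM (set22 _ _)) set21.
move: x1_in; rewrite !inE => /orP[/eqP //|/eqP x1y].
by have /andP[_] := partnerP x1 x1C; rewrite e12 -x1y (inA x1 x1C).
Qed.

Lemma card_crossing W M A B : perfect_matching W M -> [disjoint A & B] ->
  W \subset A :|: B -> #|crossing W M A| = #|crossing W M B|.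
Proof.
move=> pm AB WAB; apply/anti_leq/andP; split; apply: card_crossing_le pm _ _ => //.
  by rewrite disjoint_sym.
by rewrite setUC.
Qed.

End PerfectMatching.

Lemma perfect_matching_subrel (V : finType) (E E' : rel V) (W : {set V}) M :
  {in W &, subrel E E'} -> perfect_matching E W M -> perfect_matching E' W M.
Proof.
move=> EE' [edges once]; split=> // m /edges[x [y [xW yW mxy xy Exy]]].
by exists x, y; split=> //; apply: EE'.
Qed.

Section DecompositionTree.
Variable V : finType.
Implicit Types (s t T l r : dtree V) (S X W : {set V}).

Lemma has_pmP t W : reflect (exists M, perfect_matching (dE t) W M) (has_pm t W).
Proof.
apply: (iffP existsP) => [[M /andP[/forallP edges /forallP once]]|[M [edges once]]].
  exists M; split=> [m mM|x xW]; last by apply/eqP; exact: implyP (once x) xW.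
  move/implyP: (edges m) => /(_ mM)/existsP[x /andP[xW /existsP[y /andP[yW]]]].
  by case/andP=> /andP[/eqP mxy xy] Exy; exists x, y.
exists M; apply/andP; split; apply/forallP.
  move=> m; apply/implyP => /edges[x [y [xW yW -> xy Exy]]].
  by apply/existsP; exists x; rewrite xW; apply/existsP; exists y; rewrite yW eqxx xy Exy.
by move=> x; apply/implyP => /once->.
Qed.

Lemma mem_dV t x : (x \in dV t) = (x \in dleaves t).
Proof. by elim: t => [y|o l IHl r IHr] /=; rewrite !inE ?IHl ?IHr ?mem_cat. Qed.

Lemma dTS_sub t : dTS t \subset dV t.
Proof.
elim: t => [y|[] l IHl r IHr] //=; try exact: setUSS.
exact: subset_trans IHl (subsetUl _ _).
Qed.

Lemma dTS_nonempty t : exists x, x \in dTS t.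
Proof.
elim: t => [y|[] l [x IHl] r _] /=; first by exists y; rewrite inE.
all: by exists x; rewrite ?inE ?IHl.
Qed.

Lemma dE_dV t x y : dE t x y -> (x \in dV t) && (y \in dV t).
Proof.
elim: t => [z|o l IHl r IHr] //=; have [TSl TSr] := (subsetP (dTS_sub l), subsetP (dTS_sub r)).
rewrite !inE; case/or3P => [/IHl/andP[-> ->] //|/IHr/andP[-> ->]|]; rewrite ?orbT //.
by case: o => //= /orP[]/andP[/TSl-> /TSr->]; rewrite ?orbT.
Qed.

Lemma dE_sym t : symmetric (dE t).
Proof.
elim: t => [z|o l IHl r IHr] x y //=; rewrite IHl IHr.
by case: o => //; rewrite [X in _ || (_ || X)]orbC.
Qed.

Lemma dE_true_twinC l r : dE (Node TrueTwin l r) =2 dE (Node TrueTwin r l).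
Proof.
move=> x y /=; rewrite orbCA; congr (_ || (_ || _)).
by rewrite orbC [(x \in _) && _]andbC [(y \in _) && _]andbC.
Qed.

Lemma uniq_dleaves_node s T : is_node s T -> uniq (dleaves T) -> uniq (dleaves s).
Proof.
elim: T => [y|o l IHl r IHr] /=; first by case=> // ->.
by case=> [-> //|[/IHl sl|/IHr sr]]; rewrite cat_uniq => /and3P[ul _ ur]; [apply: sl | apply: sr].
Qed.

Lemma disjoint_children o l r : uniq (dleaves (Node o l r)) -> [disjoint dV l & dV r].
Proof.
rewrite /= cat_uniq => /and3P[_ /hasPn lr _].
by apply/pred0P => x /=; rewrite !mem_dV; apply/negbTE/andP => -[xl /lr/negP].
Qed.

Lemma cnbhP t S x :
  reflect (x \in S \/ exists2 y, y \in S & dE t x y) (x \in cnbh t S).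
Proof.
rewrite !inE; apply: (iffP orP) => [[xS|/existsP[y /andP[yS Exy]]]|[xS|[y yS Exy]]].
- by left.
- by right; exists y.
- by left.
- by right; apply/existsP; exists y; rewrite yS.
Qed.

Lemma eq_cnbh t t' S : dE t =2 dE t' -> cnbh t S = cnbh t' S.
Proof.
move=> tt'; apply/setP => x; apply/cnbhP/cnbhP => -[xS|[y yS Exy]]; [by left|right|by left|right].
  by exists y; rewrite -?tt'.
by exists y; rewrite ?tt'.
Qed.

Lemma cnbh_node o l r Sl Sr :
  cnbh l Sl :|: cnbh r Sr \subset cnbh (Node o l r) (Sl :|: Sr).
Proof.
apply/subsetP => x; rewrite inE => /orP[] /cnbhP[xS|[y yS Exy]]; apply/cnbhP.
- by left; rewrite inE xS.
- by right; exists y; rewrite /= ?inE ?yS ?Exy.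
- by left; rewrite inE xS orbT.
- by right; exists y; rewrite /= ?inE ?yS ?Exy ?orbT.
Qed.

Lemma exists_neighbour t u : uniq (dleaves t) -> u \in dV t -> u \notin dTS t ->
  exists2 w, w != u & dE t u w.
Proof.
elim: t u => [y|o l IHl r IHr] u /=; first by move=> _ ->.
move=> un; have lr := @disjoint_children o l r un.
move: un; rewrite cat_uniq => /and3P[ul _ ur].
rewrite inE => /orP[uVl|uVr] uTS.
  have /(IHl u ul uVl)[w wu Euw] : u \notin dTS l.
    by apply: contra uTS; case: o => //= h; rewrite inE h.
  by exists w; rewrite // Euw.
have [uTSr|uTSr] := boolP (u \in dTS r); last first.
  by have [w wu Euw] := IHr u ur uVr uTSr; exists w; rewrite // Euw orbT.
move: uTS; case: o => /=; rewrite ?inE ?uTSr ?orbT // => _.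
have [w wTS] := dTS_nonempty l; exists w; last by rewrite wTS !orbT.
by apply: contraTneq uVr => <-; rewrite (disjointFr lr (subsetP (dTS_sub l) w wTS)).
Qed.

Lemma exists_kfeasible0 t : uniq (dleaves t) -> exists S, kfeasible 0 t S.
Proof.
move=> un; pose P S := (S \subset dV t) && has_pm t S.
have P0 : P set0 by rewrite /P sub0set; apply/has_pmP; exists set0; exact: perfect_matching0.
have [S /andP[SV /has_pmP[M pmM]] Smax] := arg_maxnP (fun S => #|cnbh t S|) P0.
exists S; rewrite /kfeasible SV /=; apply/andP; split; last first.
  by apply/existsP; exists set0; rewrite sub0set cards0 setD0; apply/has_pmP; exists M.
(* An undominated u outside the twin set could be matched with a neighbour and added to S. *)
apply/subsetP => u /setDP[uV uTS]; apply/negPn/negP => uN.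
have [w wu Euw] := exists_neighbour un uV uTS.
have uS : u \notin S by apply: contra uN => uS; apply/cnbhP; left.
have wS : w \notin S by apply: contra uN => wS; apply/cnbhP; right; exists w.
have /Smax : P ([set u; w] :|: S).
  rewrite /P subUset SV andbT subUset !sub1set; case/andP: (dE_dV Euw) => -> -> /=.
  apply/has_pmP; exists ([set [set u; w]] :|: M); apply: perfect_matchingU _ _ pmM.
  - by rewrite disjoints_subset; apply/subsetP => x; rewrite !inE => /orP[]/eqP->.
  - by apply: perfect_matching_pair; rewrite // eq_sym.
apply/negP; rewrite -ltnNge; apply/proper_card/properP; split.
  apply/subsetP => x /cnbhP[xS|[y yS Exy]]; apply/cnbhP.
    by left; rewrite inE xS orbT.
  by right; exists y; rewrite // inE yS orbT.
by exists u => //; apply/cnbhP; left; rewrite !inE eqxx.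
Qed.

End DecompositionTree.

Definition parity_range (lo hi k : nat) : Prop := lo <= k <= hi /\ odd k = odd lo.

Section Gamma.
Variable V : finType.
Implicit Types (t : dtree V) (S : {set V}).

Lemma kfeasible_le k t S : kfeasible k t S -> k <= #|dTS t|.
Proof.
case/and3P=> _ _ /existsP[X /and3P[XS /eqP <- _]].
exact/subset_leq_card/(subset_trans XS)/subsetIr.
Qed.

Lemma kfeasible_odd k t S : kfeasible k t S -> odd #|S| = odd k.
Proof.
case/and3P=> _ _ /existsP[X /and3P[XS /eqP <- /has_pmP[M /perfect_matching_even]]].
have XS' : X \subset S := subset_trans XS (subsetIl _ _).
by rewrite -(cardsID X S) (setIidPr XS') oddD => /negbTE->; rewrite addbF.
Qed.

Lemma hgamma_le k t S : kfeasible k t S -> hgamma k t <= #|S|.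
Proof. by move=> feas; apply: bigmin_le; rewrite ?mem_index_enum. Qed.

Lemma hgamma_le_infty k t : hgamma k t <= infty V.
Proof. exact: bigmin_le_idx. Qed.

Lemma hgamma_geq n k t : n <= infty V ->
  (forall S, kfeasible k t S -> n <= #|S|) -> n <= hgamma k t.
Proof. exact: bigmin_geq. Qed.

Lemma hgamma_attained k t :
  hgamma k t < infty V -> exists2 S, kfeasible k t S & hgamma k t = #|S|.
Proof. exact: bigmin_attained. Qed.

Lemma hgamma_odd k t : hgamma k t < infty V -> odd (hgamma k t) = odd k.
Proof. by case/hgamma_attained => S /kfeasible_odd <- ->. Qed.

Lemma hmin_le k t : k <= #|dTS t| -> hmin t <= hgamma k t.
Proof.
by rewrite -ltnS => kn; apply: bigmin_le (mem_index_enum (Ordinal kn)) _.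
Qed.

Lemma hmin_attained t :
  hmin t < infty V -> exists2 k, k <= #|dTS t| & hgamma k t = hmin t.
Proof. by rewrite /hmin; case/bigmin_attained => k _ ->; exists k; rewrite // -ltnS. Qed.

Lemma halpha_eq t a : a <= #|dTS t| ->
  (forall k, k <= #|dTS t| -> hgamma a t <= hgamma k t) ->
  (forall k, k < a -> hgamma a t < hgamma k t) -> halpha t = a.
Proof.
move=> an a_min a_first.
have hminE : hmin t = hgamma a t.
  apply/anti_leq; rewrite hmin_le //=.
  by apply: bigmin_geq => [|k _]; rewrite ?hgamma_le_infty // a_min // -ltnS.
rewrite /halpha /argks hminE; apply: head_filter_iota => [||k ka]; rewrite ?ltnS //.
by rewrite neq_ltn a_first ?orbT.
Qed.

Lemma hmin_lt_infty t : uniq (dleaves t) -> hmin t < infty V.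
Proof.
case/exists_kfeasible0 => S feas0.
apply: leq_ltn_trans (hmin_le (leq0n _)) (leq_ltn_trans (hgamma_le feas0) _).
by rewrite ltnS max_card.
Qed.

Lemma propP_argmin t : uniq (dleaves t) -> propP t ->
  [/\ halpha t <= hbeta t <= #|dTS t|, odd (hbeta t) = odd (halpha t) &
      forall k, k <= #|dTS t| -> hgamma k t = hmin t <-> parity_range (halpha t) (hbeta t) k].
Proof.
move=> /hmin_lt_infty min_fin shape.
have [alpha_in beta_in] : halpha t \in argks t /\ hbeta t \in argks t.
  have [k kn gk] := hmin_attained min_fin.
  have : k \in argks t by rewrite mem_filter gk eqxx mem_iota ltnS kn.
  rewrite /halpha /hbeta; case: (argks t) => // x s _.
  by split; [exact: mem_head | exact: mem_last].
move: alpha_in beta_in; rewrite !mem_filter !mem_iota !ltnS /=.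
move=> /andP[/eqP ga an] /andP[/eqP gb bn].
have ab : halpha t <= hbeta t.
  by rewrite leqNgt; apply/negP => ba; move: (shape _ bn); rewrite gb (ltnW ba); lia.
have parity : odd (hbeta t) = odd (halpha t).
  have := hgamma_odd (k := halpha t) (t := t); have := hgamma_odd (k := hbeta t) (t := t).
  by rewrite ga gb => <- // <-.
split=> // [|k kn]; first by rewrite ab bn.
rewrite shape // /parity_range; case: ifP => ?; [|case: ifP => ?; [|case: ifP => ?]]; lia.
Qed.

Lemma kfeasible_argmin t k : uniq (dleaves t) -> propP t ->
  parity_range (halpha t) (hbeta t) k -> exists2 S, kfeasible k t S & #|S| = hmin t.
Proof.
move=> un Pt rk; have [/andP[_ bn] _ argmin] := propP_argmin un Pt.
have kn : k <= #|dTS t| by case: rk => /andP[_ kb] _; exact: leq_trans kb bn.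
have gk : hgamma k t = hmin t by apply/(argmin _ kn).
have [|S feas cardS] := hgamma_attained (k := k) (t := t); first by rewrite gk hmin_lt_infty.
by exists S; rewrite // -cardS.
Qed.

End Gamma.

Section TrueTwin.
Variables (V : finType) (l r : dtree V).
Hypothesis lr : [disjoint dV l & dV r].
Local Notation t := (Node TrueTwin l r).
Implicit Types (S X W Sl Sr Xl Xr Yl Yr : {set V}) (M : {set {set V}}).

Lemma dE_true_twinl x y : x \in dV l -> y \in dV l -> dE t x y = dE l x y.
Proof.
move=> xl yl /=; have notTSr z : z \in dV l -> (z \in dTS r) = false.
  by move=> zl; apply: contraFF (disjointFr lr zl) => /(subsetP (dTS_sub r)).
rewrite (notTSr x xl) (notTSr y yl) !andbF !orbF.
by case Er: (dE r x y); rewrite ?orbF //; case/andP: (dE_dV Er); rewrite (disjointFr lr xl).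
Qed.

Lemma dE_true_twin_cross x y :
  x \in dV l -> y \in dV r -> dE t x y = (x \in dTS l) && (y \in dTS r).
Proof.
move=> xl yr /=.
have Elr : dE l x y = false /\ dE r x y = false.
  by split; apply/negP => /dE_dV/andP[]; rewrite ?(disjointFr lr xl) ?(disjointFl lr yr).
have [yTSl xTSr] : (y \in dTS l) = false /\ (x \in dTS r) = false.
  by split; apply/negP => /(subsetP (dTS_sub _)); rewrite ?(disjointFl lr yr) ?(disjointFr lr xl).
by rewrite Elr.1 Elr.2 yTSl xTSr andbF orbF.
Qed.

Lemma crossing_true_twin_dTS W M : W \subset dV t -> perfect_matching (dE t) W M ->
  crossing W M (dV l) \subset dTS l.
Proof.
move=> WV pm; apply/subsetP => x xC.
have [y [yW yl _ Exy]] := crossing_partner pm xC.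
have /setIP[_ xl] := subsetP (subsetDl _ _) x xC.
have yr : y \in dV r by move: (subsetP WV y yW); rewrite inE (negbTE yl).
by move: Exy; rewrite (dE_sym _ y) orbb dE_true_twin_cross // => /andP[].
Qed.

Lemma kfeasible_true_twin_restrict S X M :
  S \subset dV t -> dV t :\: dTS t \subset cnbh t S -> X \subset S :&: dTS t ->
  perfect_matching (dE t) (S :\: X) M ->
  kfeasible (#|X :&: dV l| + #|crossing (S :\: X) M (dV l)|) l (S :&: dV l).
Proof.
move=> SV dom XS pm; set C := crossing _ M _.
have CTS : C \subset dTS l := crossing_true_twin_dTS (subset_trans (subsetDl _ _) SV) pm.
have /subsetIP[CSX Cl] : C \subset (S :\: X) :&: dV l by apply: subsetDl.
have CX : [disjoint C & X] by move: CSX; rewrite subsetD => /andP[].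
apply/and3P; split; first exact: subsetIr.
  apply/subsetP => u /setDP[ul uTS].
  have uV : u \in (dV l :|: dV r) :\: (dTS l :|: dTS r).
    rewrite !inE ul negb_or uTS andbT /=.
    by apply: contraFN (disjointFr lr ul) => /(subsetP (dTS_sub r)).
  have /cnbhP[uS|[y yS Euy]] := subsetP dom u uV.
    by apply/cnbhP; left; rewrite inE uS.
  have := subsetP SV y yS; rewrite inE => /orP[yl|yr].
    by apply/cnbhP; right; exists y; rewrite ?inE ?yS // -dE_true_twinl.
  by move: Euy; rewrite dE_true_twin_cross // (negbTE uTS).
apply/existsP; exists ((X :&: dV l) :|: C); apply/and3P; split.
- rewrite subUset !subsetI subsetIr CTS Cl (subset_trans CSX (subsetDl _ _)) !andbT.
  apply/andP; split; first exact: subset_trans (subsetIl _ _) (subset_trans XS (subsetIl _ _)).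
  apply/subsetP => z /setIP[/(subsetP XS)/setIP[_]]; rewrite inE => /orP[//|zr] zl.
  by move: (subsetP (dTS_sub r) z zr); rewrite (disjointFr lr zl).
- have XlC : [disjoint X :&: dV l & C] by rewrite disjoint_sym; apply: disjointWr (subsetIl _ _) CX.
  by rewrite cardsU_disjoint.
- have -> : (S :&: dV l) :\: ((X :&: dV l) :|: C) = ((S :\: X) :&: dV l) :\: C.
    by apply/setP => z; rewrite -setDDl !inE; case: (z \in dV l); rewrite ?andbF ?andbT.
  rewrite setDDr setDv set0U (setIidPr _); last by apply/subsetP => z; rewrite inE => /andP[].
  apply/has_pmP; exists [set m in M | m \subset dV l].
  apply: perfect_matching_subrel (perfect_matching_within _ pm) => x y.
  by rewrite !inE => /andP[/andP[_ xl] _] /andP[/andP[_ yl] _]; rewrite dE_true_twinl.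
Qed.

Lemma has_pm_true_twin_join Sl Sr Xl Xr Yl Yr :
  Sl \subset dV l -> Sr \subset dV r -> Xl \subset Sl :&: dTS l -> Xr \subset Sr :&: dTS r ->
  Yl \subset Xl -> Yr \subset Xr -> #|Yl| = #|Yr| ->
  has_pm l (Sl :\: Xl) -> has_pm r (Sr :\: Xr) ->
  has_pm t ((Sl :|: Sr) :\: ((Xl :\: Yl) :|: (Xr :\: Yr))).
Proof.
move=> SlV SrV /subsetIP[XlS XlTS] /subsetIP[XrS XrTS] YlX YrX cardY.
move=> /has_pmP[Ml pml] /has_pmP[Mr pmr].
have XlV := subset_trans XlS SlV; have XrV := subset_trans XrS SrV.
have Y_edges : {in Yl & Yr, forall x y, dE t x y}.
  move=> x y /(subsetP YlX) xXl /(subsetP YrX) yXr.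
  by rewrite dE_true_twin_cross ?(subsetP XlTS) ?(subsetP XrTS) ?(subsetP XlV) ?(subsetP XrV).
have [MY pmY] := perfect_matching_biclique cardY (erefl _)
  (disjointW (subset_trans YlX XlV) (subset_trans YrX XrV) lr) Y_edges.
have SlXr : [disjoint Sl & Xr :\: Yr] := disjointW SlV (subset_trans (subsetDl _ _) XrV) lr.
have SrXl : [disjoint Sr & Xl :\: Yl].
  by rewrite disjoint_sym; apply: disjointW (subset_trans (subsetDl _ _) XlV) SrV lr.
rewrite setDUl (setD_setDU YlX XlS SlXr) [X in Sr :\: X]setUC (setD_setDU YrX XrS SrXl).
rewrite setUACA; apply/has_pmP; exists ((Ml :|: Mr) :|: MY); apply: perfect_matchingU _ _ pmY.
- rewrite disjoints_subset; apply/subsetP => z; rewrite !inE negb_or.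
  case/orP => /andP[zX zS]; apply/andP; split.
  + exact: contra (subsetP YlX z) zX.
  + by apply/negP => /(subsetP (subset_trans YrX XrV)); rewrite (disjointFr lr (subsetP SlV z zS)).
  + by apply/negP => /(subsetP (subset_trans YlX XlV)); rewrite (disjointFl lr (subsetP SrV z zS)).
  + exact: contra (subsetP YrX z) zX.
apply: perfect_matchingU.
- exact: disjointW (subset_trans (subsetDl _ _) SlV) (subset_trans (subsetDl _ _) SrV) lr.
- by apply: perfect_matching_subrel pml => x y _ _ /= ->.
- by apply: perfect_matching_subrel pmr => x y _ _ /= ->; rewrite orbT.
Qed.

Lemma kfeasible_true_twin_join a b c Sl Sr : kfeasible a l Sl -> kfeasible b r Sr ->
  c <= a -> c <= b -> kfeasible (a + b - c.*2) t (Sl :|: Sr).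
Proof.
move=> /and3P[SlV doml /existsP[Xl /and3P[XlSTS /eqP <- pml]]].
move=> /and3P[SrV domr /existsP[Xr /and3P[XrSTS /eqP <- pmr]]] ca cb.
have [Yl YlX cardYl] := exists_subset_card ca; have [Yr YrX cardYr] := exists_subset_card cb.
have /subsetIP[XlS XlTS] := XlSTS; have /subsetIP[XrS XrTS] := XrSTS.
apply/and3P; split; first exact: setUSS.
  apply/subsetP => u /setDP[/setUP uV uT]; apply: (subsetP (cnbh_node TrueTwin l r Sl Sr)).
  have [uTSl uTSr] : u \notin dTS l /\ u \notin dTS r by apply/norP; rewrite -in_setU.
  case: uV => [ul|ur]; rewrite inE.
  - by rewrite (subsetP doml) // inE uTSl ul.
  - by rewrite (subsetP domr) ?orbT // inE uTSr ur.
apply/existsP; exists ((Xl :\: Yl) :|: (Xr :\: Yr)); apply/and3P; split.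
- rewrite subUset !subsetI -andbA; apply/and4P; split; apply: subset_trans (subsetDl _ _) _.
  + exact: subset_trans XlS (subsetUl _ _).
  + exact: subset_trans XlTS (subsetUl _ _).
  + exact: subset_trans XrS (subsetUr _ _).
  + exact: subset_trans XrTS (subsetUr _ _).
- have XlXr : [disjoint Xl :\: Yl & Xr :\: Yr].
    apply: disjointW (subset_trans (subsetDl _ _) (subset_trans XlS SlV)) _ lr.
    exact: subset_trans (subsetDl _ _) (subset_trans XrS SrV).
  rewrite cardsU_disjoint // !cardsDS // cardYl cardYr.
  by move: #|Xl| #|Xr| ca cb => x y; clear; lia.
exact: has_pm_true_twin_join (etrans cardYl (esym cardYr)) pml pmr.
Qed.

End TrueTwin.

Lemma kfeasible_true_twin_split (V : finType) (l r : dtree V) k S :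
  [disjoint dV l & dV r] -> kfeasible k (Node TrueTwin l r) S ->
  exists xl xr c, [/\ k = xl + xr, kfeasible (xl + c) l (S :&: dV l)
                    & kfeasible (xr + c) r (S :&: dV r)].
Proof.
move=> lr /and3P[SV dom /existsP[X /and3P[XS /eqP <- /has_pmP[M pm]]]].
have rl : [disjoint dV r & dV l] by rewrite disjoint_sym.
have SXV : S :\: X \subset dV l :|: dV r := subset_trans (subsetDl _ _) SV.
exists #|X :&: dV l|, #|X :&: dV r|, #|crossing (S :\: X) M (dV l)|; split.
- exact: card_disjoint_cover lr (subset_trans XS (subset_trans (subsetIl _ _) SV)).
- exact (kfeasible_true_twin_restrict lr SV dom XS pm).
rewrite (card_crossing pm lr SXV); apply: (kfeasible_true_twin_restrict rl).
- by rewrite /= setUC.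
- by rewrite /= [dV r :|: _]setUC [dTS r :|: _]setUC (eq_cnbh _ (dE_true_twinC r l)).
- by rewrite /= setUC.
- by apply: perfect_matching_subrel pm => x y _ _; rewrite dE_true_twinC.
Qed.

Definition true_twin_alpha (al bl ar br : nat) : nat :=
  if br < al then al - br
  else if bl < ar then ar - bl
  else (maxn al ar - minn al ar) %% 2.

Section TrueTwinAlpha.
Variables al bl ar br : nat.

Lemma true_twin_alpha_le a b c : parity_range al bl a -> parity_range ar br b ->
  c <= a -> c <= b -> true_twin_alpha al bl ar br <= a + b - c.*2.
Proof. by rewrite /parity_range /true_twin_alpha; case: ifP; [|case: ifP]; lia. Qed.

Lemma true_twin_alpha_attained : al <= bl -> ar <= br -> odd bl = odd al -> odd br = odd ar ->
  exists a b c, [/\ parity_range al bl a, parity_range ar br b, c <= a, c <= b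
                  & a + b - c.*2 = true_twin_alpha al bl ar br].
Proof.
move=> alb arb pl pr; rewrite /parity_range /true_twin_alpha.
case: ifP => [bral|albr]; first by exists al, br, br; split; lia.
case: ifP => [blar|arbl]; first by exists bl, ar, bl; split; lia.
case: (leqP al ar) => [alar|aral]; case: (boolP (odd al == odd ar)) => /eqP par.
- by exists ar, ar, ar; split; lia.
- by exists ar.-1, ar, ar.-1; split; lia.
- by exists al, al, al; split; lia.
- by exists al, al.-1, al.-1; split; lia.
Qed.

End TrueTwinAlpha.

Section TrueTwinNode.
Variables (V : finType) (l r : dtree V).
Hypotheses (ul : uniq (dleaves l)) (ur : uniq (dleaves r)) (lr : [disjoint dV l & dV r]).
Hypotheses (Pl : propP l) (Pr : propP r).
Local Notation t := (Node TrueTwin l r).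
Local Notation alpha_lr := (true_twin_alpha (halpha l) (hbeta l) (halpha r) (hbeta r)).

Lemma kfeasible_true_twin_hgamma k S : kfeasible k t S ->
  exists xl xr c, [/\ k = xl + xr, xl + c <= #|dTS l|, xr + c <= #|dTS r|
                    & hgamma (xl + c) l + hgamma (xr + c) r <= #|S|].
Proof.
move=> feas; have /and3P[SV _ _] := feas.
have [xl [xr [c [-> feasl feasr]]]] := kfeasible_true_twin_split lr feas.
exists xl, xr, c; split; rewrite ?(kfeasible_le feasl) ?(kfeasible_le feasr) //.
by rewrite (card_disjoint_cover lr SV) leq_add // hgamma_le.
Qed.

Lemma hmin_true_twin_le k S : kfeasible k t S -> hmin l + hmin r <= #|S|.
Proof.
case/kfeasible_true_twin_hgamma => xl [xr [c [_ cl cr le_S]]].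
exact: leq_trans (leq_add (hmin_le cl) (hmin_le cr)) le_S.
Qed.

Lemma true_twin_alpha_le_kfeasible k S :
  kfeasible k t S -> #|S| = hmin l + hmin r -> alpha_lr <= k.
Proof.
case/kfeasible_true_twin_hgamma => xl [xr [c [-> cl cr le_S]]] cardS.
have [minl minr] := (hmin_le cl, hmin_le cr).
have [_ _ argl] := propP_argmin ul Pl; have [_ _ argr] := propP_argmin ur Pr.
have /(argl _ cl) rangel : hgamma (xl + c) l = hmin l by lia.
have /(argr _ cr) ranger : hgamma (xr + c) r = hmin r by lia.
have := true_twin_alpha_le rangel ranger (leq_addl _ _) (leq_addl _ _).
by rewrite -addnn addnACA addnK.
Qed.

Lemma kfeasible_true_twin_alpha :
  exists2 S, kfeasible alpha_lr t S & #|S| = hmin l + hmin r.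
Proof.
have [/andP[alb _] pl _] := propP_argmin ul Pl.
have [/andP[arb _] pr _] := propP_argmin ur Pr.
have [a [b [c [ra rb ca cb <-]]]] := true_twin_alpha_attained alb arb pl pr.
have [[Sl feasl <-] [Sr feasr <-]] := (kfeasible_argmin ul Pl ra, kfeasible_argmin ur Pr rb).
exists (Sl :|: Sr); first exact: kfeasible_true_twin_join.
have [/and3P[SlV _ _] /and3P[SrV _ _]] := (feasl, feasr).
by rewrite cardsU_disjoint // (disjointW SlV SrV lr).
Qed.

Lemma halpha_true_twin : halpha t = alpha_lr.
Proof.
have [S feasS cardS] := kfeasible_true_twin_alpha.
have gamma_alpha : hgamma alpha_lr t <= hmin l + hmin r by rewrite -cardS hgamma_le.
have m_lt_infty : hmin l + hmin r < infty V by rewrite -cardS ltnS max_card.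
have gamma_ge k : hmin l + hmin r <= hgamma k t.
  by apply: hgamma_geq (ltnW m_lt_infty) _ => S'; apply: hmin_true_twin_le.
apply: halpha_eq => [|k _|k k_lt]; first exact: kfeasible_le feasS.
  exact: leq_trans gamma_alpha (gamma_ge k).
rewrite ltnNge; apply/negP => le_k.
have gk : hgamma k t = hmin l + hmin r by apply/anti_leq; rewrite gamma_ge (leq_trans le_k).
have [|S' feas' cardS'] := hgamma_attained (k := k) (t := t); first by rewrite gk.
by move: k_lt; rewrite ltnNge (true_twin_alpha_le_kfeasible feas') // -cardS' gk.
Qed.

End TrueTwinNode.

Theorem lemma8 (V : finType) (e : rel V) (T vl vr : dtree V) :
  symmetric e -> irreflexive e ->
  distance_hereditary e ->
  decomp_tree e T ->
  is_node (Node TrueTwin vl vr) T ->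
  propP vl -> propP vr ->
  halpha (Node TrueTwin vl vr) =
    if hbeta vr < halpha vl then halpha vl - hbeta vr
    else if hbeta vl < halpha vr then halpha vr - hbeta vl
    else (maxn (halpha vl) (halpha vr) - minn (halpha vl) (halpha vr)) %% 2.
Proof.
move=> _ _ _ [uniqT _ _] node Pl Pr.
have un := uniq_dleaves_node node uniqT.
have lr := disjoint_children un.
move: un; rewrite /= cat_uniq => /and3P[ul _ ur].
exact: halpha_true_twin.
Qed.
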